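(* Let $G$ be a wheel-like brick and let $u_h$ be a hub of $G$. Then every multiple edge of $G$ is incident with $u_h$.
   Context: Graphs are finite and loopless; multiple edges allowed (an edge is a multiple edge if some other edge has the same two ends). A graph is matching covered if it is connected, has at least two vertices, and every edge lies in a perfect matching. A cut (edges with exactly one end in a vertex set $X$) is tight if every perfect matching contains exactly one of its edges, trivial if one side has one vertex. A brick is a nonbipartite matching covered graph all of whose tight cuts are trivial. An edge $e$ is removable if $G-e$ is matching covered; a pair $\{e,f\}$ is a removable doubleton if $G-e-f$ is matching covered but neither $G-e$ nor $G-f$ is; these are the removable classes. A brick $G$ is wheel-like if it has a vertex $h$, called a hub, such that every removable class contains an edge incident with $h$. *)

(* Spanning subgraphs (such as G - e, G - e - f) are
   represented by the set D : {set E} of edges kept; G itself is D = setT. *)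
From mathcomp Require Import all_boot.
Set Implicit Arguments. Unset Strict Implicit. Unset Printing Implicit Defensive.

Section Graphs.
Variables (V E : finType) (src dst : E -> V).

Definition incident (e : E) (v : V) : bool := (src e == v) || (dst e == v).

Definition adj (D : {set E}) : rel V :=
  fun x y => [exists e in D, ((src e == x) && (dst e == y)) ||
                             ((src e == y) && (dst e == x))].

Definition connectedG (D : {set E}) : Prop := forall x y : V, connect (adj D) x y.

Definition perfect_matching (D M : {set E}) : Prop :=
  M \subset D /\ forall v : V, #|[set e in M | incident e v]| = 1.

Definition matching_covered (D : {set E}) : Prop :=
  connectedG D /\ 2 <= #|V| /\
  forall e, e \in D -> exists M, perfect_matching D M /\ e \in M.

Definition cut (D : {set E}) (X : {set V}) : {set E} :=
  [set e in D | (src e \in X) != (dst e \in X)].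

Definition tight_cut (D : {set E}) (X : {set V}) : Prop :=
  forall M, perfect_matching D M -> #|M :&: cut D X| = 1.

Definition trivial_cut (X : {set V}) : Prop := #|X| = 1 \/ #|~: X| = 1.

Definition bipartite (D : {set E}) : Prop :=
  exists X : {set V}, forall e, e \in D -> (src e \in X) != (dst e \in X).

Definition brick (D : {set E}) : Prop :=
  ~ bipartite D /\ matching_covered D /\
  forall X : {set V}, tight_cut D X -> trivial_cut X.

Definition removable_edge (D : {set E}) (e : E) : Prop :=
  e \in D /\ matching_covered (D :\ e).

Definition removable_doubleton (D : {set E}) (e f : E) : Prop :=
  e \in D /\ f \in D /\ e != f /\
  matching_covered (D :\ e :\ f) /\
  ~ matching_covered (D :\ e) /\ ~ matching_covered (D :\ f).

Definition removable_class (D : {set E}) (C : {set E}) : Prop :=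
  (exists e, C = [set e] /\ removable_edge D e) \/
  (exists e f, C = [set e; f] /\ removable_doubleton D e f).

Definition is_hub (D : {set E}) (h : V) : Prop :=
  forall C, removable_class D C -> exists2 e, e \in C & incident e h.

Definition wheel_like (D : {set E}) : Prop :=
  brick D /\ exists h, is_hub D h.

Definition multiple_edge (D : {set E}) (e : E) : Prop :=
  e \in D /\ exists2 f, f \in D &
    (f != e) && [|| (src f == src e) && (dst f == dst e)
                  | (src f == dst e) && (dst f == src e)].

End Graphs.

(* An edge e with a parallel twin f is removable in any matching covered
   graph: deleting e does not change adjacency, and a perfect matching
   through e becomes one avoiding e after exchanging e for f, since the two
   edges cover the same vertices.  Hence {e} is a removable class, and it
   meets every hub. *)
From mathcomp Require Import all_boot.
From mathcomp Require Import fingroup perm.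
Set Implicit Arguments. Unset Strict Implicit. Unset Printing Implicit Defensive.

Section ParallelEdges.
Variables (V E : finType) (src dst : E -> V).

Local Notation incident := (incident src dst).
Local Notation adj := (adj src dst).
Local Notation perfect_matching := (perfect_matching src dst).

Definition parallel (f e : E) : bool :=
  (src f == src e) && (dst f == dst e) || (src f == dst e) && (dst f == src e).

Variables (D : {set E}) (e f : E).
Hypotheses (fD : f \in D) (fe : f != e) (fe_par : parallel f e).

Lemma incident_parallel : incident f =1 incident e.
Proof.
move=> v; rewrite /incident.
by case/orP: fe_par => /andP [/eqP -> /eqP ->] //; rewrite orbC.
Qed.

Lemma adj_setD1_parallel : adj (D :\ e) =2 adj D.
Proof.
move=> x y; apply/existsP/existsP => [[g /andP [/setD1P [_ gD] hg]]|].
  by exists g; rewrite gD.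
move=> [g /andP [gD hg]]; case: (eqVneq g e) => [gE | ge]; last first.
  by exists g; rewrite !inE ge gD.
exists f; rewrite !inE fe fD /=; subst g.
by case/orP: hg => /andP [/eqP <- /eqP <-];
  case/orP: fe_par => /andP [/eqP -> /eqP ->]; rewrite ?eqxx ?orbT.
Qed.

Lemma connectedG_setD1_parallel :
  connectedG src dst D -> connectedG src dst (D :\ e).
Proof. by move=> conn x y; rewrite (eq_connect adj_setD1_parallel). Qed.

Lemma parallel_notin_matching M :
  perfect_matching D M -> e \in M -> f \notin M.
Proof.
move=> [_ cardM] eM; apply/negP => fM.
have := cardM (src e); rewrite (cardD1 e) (cardD1 f) !inE eM fM fe.
by rewrite incident_parallel /incident eqxx.
Qed.

Lemma card_incident_imset (s : {perm E}) (M : {set E}) v :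
  (forall x, incident (s x) v = incident x v) ->
  #|[set x in s @: M | incident x v]| = #|[set x in M | incident x v]|.
Proof.
move=> inc_s; rewrite -(card_imset [set x in M | incident x v] (@perm_inj _ s)).
apply: eq_card => x; rewrite !inE; apply/andP/imsetP.
  move=> [/imsetP [y yM ->] hy]; exists y => //.
  by rewrite inE yM -inc_s.
by move=> [y]; rewrite inE => /andP [yM hy] ->; rewrite imset_f // inc_s.
Qed.

Lemma perfect_matching_swap_parallel M :
  perfect_matching D M -> e \in M ->
  perfect_matching (D :\ e) (tperm e f @: M).
Proof.
move=> pmM eM; have fM := parallel_notin_matching pmM eM.
have [MD cardM] := pmM.
have inc_s x v : incident (tperm e f x) v = incident x v.
  by case: tpermP => [->|->|//]; rewrite ?incident_parallel.
split=> [|v]; last by rewrite card_incident_imset.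
apply/subsetP => _ /imsetP [y yM ->]; rewrite !inE.
case: tpermP => [_ | yf | /eqP ye _]; first by rewrite fe.
  by rewrite -yf yM in fM.
by rewrite ye (subsetP MD).
Qed.

Lemma matching_covered_setD1_parallel :
  matching_covered src dst D -> matching_covered src dst (D :\ e).
Proof.
move=> [conn [cardV cov]]; split; first exact: connectedG_setD1_parallel.
split=> // g /setD1P [ge gD].
have [M [pmM gM]] := cov g gD.
case: (boolP (e \in M)) => eM.
  exists (tperm e f @: M); split; first exact: perfect_matching_swap_parallel.
  have gf : g != f by apply: contraNneq (parallel_notin_matching pmM eM) => <-.
  by rewrite -[g](@tpermD _ e f) ?imset_f // eq_sym.
exists M; split=> //; case: pmM => MD cardM; split=> //.
by apply/subsetP => x xM; rewrite !inE (subsetP MD) // andbT; apply: contraNneq eM => <-.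
Qed.

Lemma removable_edge_parallel :
  e \in D -> matching_covered src dst D -> removable_edge src dst D e.
Proof. by move=> eD /matching_covered_setD1_parallel. Qed.

End ParallelEdges.

Theorem mainTheorem8 (V E : finType) (src dst : E -> V)
  (loopless : forall e : E, src e != dst e) (h : V) :
  wheel_like src dst [set: E] -> is_hub src dst [set: E] h ->
  forall e : E, multiple_edge src dst [set: E] e -> incident src dst e h.
Proof.
move=> [[_ [mc _]] _] hub e [eD [f fD /andP [fe fe_par]]].
have rem := removable_edge_parallel fD fe fe_par eD mc.
have [x] := hub [set e] (or_introl (ex_intro _ e (conj erefl rem))).
by rewrite inE => /eqP ->.
Qed.
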